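(* Consider the two-route traffic model described in the context, under assumptions (A1)–(A6). Then the system is monotone: if $x_0,y_0\in\Omega$ satisfy $x_0\le y_0$ componentwise, then the corresponding solutions satisfy $x(t;x_0)\le x(t;y_0)$ componentwise for all $t\ge0$.
   Context: Two routes $i=1,2$ connect an origin to a destination. For each route there are positive parameters $B_i$, $C_i$, $F_i$ with $C_i<B_i$; the demand is a constant $\phi>0$. Set $v_i=F_i/C_i$ and $E_i=v_iB_i$. The state $x=(x_1,x_2)\in\Omega:=[0,B_1]\times[0,B_2]$ evolves by $\dot x_i=\min\{\phi R_i(x),S_i(x_i)\}-D_i(x_i)$, $i=1,2$, with $S_i(x_i)=F_i$ if $x_i<C_i$, $S_i(x_i)=\frac{F_i}{B_i-C_i}(B_i-x_i)$ otherwise; $D_i(x_i)=v_ix_i$ if $x_i<C_i$, $D_i(x_i)=F_i$ otherwise. Routing ratios: $R_i(x)=(1-\alpha)r_i^0+\alpha\, r_i(\tau(x))$, with $\alpha\in(0,1]$, $r_1^0,r_2^0\ge0$, $r_1^0+r_2^0=1$, $\tau(x)=(\tau_1(x_1),\tau_2(x_2))$, each $\tau_i$ $C^1$ and strictly increasing, $0\le r_i(\tau(x))\le1$, $r_1(\tau(x))+r_2(\tau(x))=1$ on $\Omega$, $x\mapsto r_i(\tau(x))$ globally Lipschitz and $C^1$ on $\Omega$. Assumptions: (A1) $\phi<F_1+F_2$; (A2)–(A3) as just listed; (A4) $\partial R_i/\partial\tau_j>0$ for $i\ne j$; (A5) $F_i>(1-\alpha)\phi r_i^0$; (A6) $\phi<E_i$,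 $i=1,2$. *)

From Stdlib Require Import Reals Lra.
From Coquelicot Require Import Coquelicot.
Open Scope R_scope.

Definition supply (F B C x : R) : R :=
  if Rlt_dec x C then F else F / (B - C) * (B - x).

Definition demand (F C x : R) : R :=
  if Rlt_dec x C then (F / C) * x else F.

Definition routing (alpha r0 : R) (r : R -> R -> R) (tau1 tau2 : R -> R)
  (x1 x2 : R) : R :=
  (1 - alpha) * r0 + alpha * r (tau1 x1) (tau2 x2).

Definition rhs (phi alpha r0 : R) (r : R -> R -> R) (tau1 tau2 : R -> R)
  (F B C : R) (x1 x2 xi : R) : R :=
  Rmin (phi * routing alpha r0 r tau1 tau2 x1 x2) (supply F B C xi)
  - demand F C xi.

Definition in_Omega (B1 B2 x1 x2 : R) : Prop :=
  0 <= x1 <= B1 /\ 0 <= x2 <= B2.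

Definition is_solution (B1 C1 F1 B2 C2 F2 phi alpha r01 r02 : R)
  (r1 r2 : R -> R -> R) (tau1 tau2 : R -> R)
  (a1 a2 : R) (x1 x2 : R -> R) : Prop :=
  x1 0 = a1 /\ x2 0 = a2 /\
  (forall t, 0 <= t -> in_Omega B1 B2 (x1 t) (x2 t)) /\
  filterlim x1 (at_right 0) (locally (x1 0)) /\
  filterlim x2 (at_right 0) (locally (x2 0)) /\
  (forall t, 0 < t ->
     is_derive x1 t (rhs phi alpha r01 r1 tau1 tau2 F1 B1 C1 (x1 t) (x2 t) (x1 t)) /\
     is_derive x2 t (rhs phi alpha r02 r2 tau1 tau2 F2 B2 C2 (x1 t) (x2 t) (x2 t))).

Definition C1_on_Omega (B1 B2 : R) (g : R -> R -> R) : Prop :=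
  exists d1 d2 : R -> R -> R,
    forall x1 x2, in_Omega B1 B2 x1 x2 ->
      is_derive (fun s => g s x2) x1 (d1 x1 x2) /\
      is_derive (fun s => g x1 s) x2 (d2 x1 x2) /\
      continuous (fun p : R * R => d1 (fst p) (snd p)) (x1, x2) /\
      continuous (fun p : R * R => d2 (fst p) (snd p)) (x1, x2).

Definition lipschitz_on_Omega (B1 B2 : R) (g : R -> R -> R) : Prop :=
  exists L, 0 <= L /\
    forall x1 x2 y1 y2, in_Omega B1 B2 x1 x2 -> in_Omega B1 B2 y1 y2 ->
      Rabs (g x1 x2 - g y1 y2) <= L * (Rabs (x1 - y1) + Rabs (x2 - y2)).

Definition C1_strict_incr (B : R) (tau : R -> R) : Prop :=
  (forall s, 0 <= s <= B -> ex_derive tau s /\ continuous (Derive tau) s) /\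
  (forall s u, 0 <= s <= B -> 0 <= u <= B -> s < u -> tau s < tau u).

From Stdlib Require Import Reals Lra Psatz.
From Coquelicot Require Import Coquelicot.
Open Scope R_scope.

(* Let u = x - y.  Route i's inflow depends on the other route's density only
   through the routing ratio, which by (A4) and the monotonicity of tau_j is
   nondecreasing in it: the system is cooperative.  Together with the Lipschitz
   bounds this gives the Kamke estimate u_i' <= L_i (u_i + u_j^+) wherever
   u_i > 0, so V = ((u_1^+)^2 + (u_2^+)^2) e^(-4 (L_1 + L_2) t) has V' <= 0 and
   V(0+) = 0; hence V = 0, i.e. u <= 0. *)

Definition pos_part (z : R) : R := Rmax z 0.

Lemma pos_part_ge0 z : 0 <= pos_part z.
Proof. apply Rmax_r. Qed.

Lemma pos_part_id z : 0 <= z -> pos_part z = z.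
Proof. intro Hz; apply Rmax_left; lra. Qed.

Lemma pos_part_eq0 z : z <= 0 -> pos_part z = 0.
Proof. apply Rmax_right. Qed.

Lemma pos_part_le_dist z z0 : z0 <= 0 -> pos_part z <= Rabs (z - z0).
Proof.
  intro Hz0; destruct (Rle_dec z 0) as [Hz | Hz].
  - rewrite pos_part_eq0 by exact Hz; apply Rabs_pos.
  - rewrite pos_part_id by lra; rewrite Rabs_pos_eq; lra.
Qed.

Lemma pos_part_sqr_taylor z h :
  Rabs (pos_part (z + h) ^ 2 - pos_part z ^ 2 - 2 * pos_part z * h) <= h ^ 2.
Proof.
  unfold pos_part, Rmax.
  destruct (Rle_dec (z + h) 0), (Rle_dec z 0); split_Rabs; nra.
Qed.

Lemma is_derive_pos_part_sqr z :
  is_derive (fun z => pos_part z ^ 2) z (2 * pos_part z).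
Proof.
  apply is_derive_Reals; intros eps Heps.
  exists (mkposreal eps Heps); intros h Hh Hlt; simpl in Hlt.
  replace ((pos_part (z + h) ^ 2 - pos_part z ^ 2) / h - 2 * pos_part z)
    with ((pos_part (z + h) ^ 2 - pos_part z ^ 2 - 2 * pos_part z * h) / h)
    by (field; exact Hh).
  assert (Hh' : 0 < Rabs h) by (apply Rabs_pos_lt; exact Hh).
  unfold Rdiv; rewrite Rabs_mult, Rabs_inv.
  apply Rmult_lt_reg_r with (Rabs h); [exact Hh'|].
  rewrite Rmult_assoc, Rinv_l by lra.
  pose proof (pos_part_sqr_taylor z h) as Hb.
  rewrite <- (pow2_abs h) in Hb. nra.
Qed.

Lemma is_derive_pos_part_sqr_comp (u : R -> R) t du :
  is_derive u t du -> is_derive (fun t => pos_part (u t) ^ 2) t (2 * pos_part (u t) * du).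
Proof.
  intro Hu.
  replace (2 * pos_part (u t) * du) with (scal du (2 * pos_part (u t)))
    by (unfold scal; simpl; unfold mult; simpl; ring).
  exact (is_derive_comp _ u t _ _ (is_derive_pos_part_sqr (u t)) Hu).
Qed.

Lemma pos_part_sqr_at_right (u : R -> R) :
  u 0 <= 0 -> filterlim u (at_right 0) (locally (u 0)) ->
  forall eps, 0 < eps -> at_right 0 (fun s => pos_part (u s) ^ 2 < eps).
Proof.
  intros Hu0 Hu eps Heps.
  set (eta := Rmin 1 eps).
  assert (Heta : 0 < eta) by (apply Rmin_pos; lra).
  apply (filter_imp (fun s => ball (u 0) eta (u s)));
    [| exact (proj1 (filterlim_locally _ _) Hu (mkposreal eta Heta))].
  intros s Hs; change (Rabs (u s - u 0) < eta) in Hs.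
  pose proof (pos_part_le_dist (u s) (u 0) Hu0).
  pose proof (pos_part_ge0 (u s)).
  assert (eta <= 1) by apply Rmin_l.
  assert (eta <= eps) by apply Rmin_r.
  clearbody eta; simpl in Hs; nra.
Qed.

Lemma continuity_pt_of_ex_derive (f : R -> R) x : ex_derive f x -> continuity_pt f x.
Proof. intro H; apply continuity_pt_filterlim; exact (ex_derive_continuous f x H). Qed.

Lemma derive_nonpos_le (g : R -> R) s t : s <= t ->
  (forall x, s <= x <= t -> exists d, is_derive g x d /\ d <= 0) -> g t <= g s.
Proof.
  intros Hst Hd.
  assert (HD : forall x, s <= x <= t -> is_derive g x (Derive g x) /\ Derive g x <= 0).
  { intros x Hx; destruct (Hd x Hx) as (d & Hdd & Hdn).
    rewrite (is_derive_unique _ _ _ Hdd); auto. }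
  destruct (MVT_gen g s t (Derive g)) as (c & Hc & Heq);
    rewrite ?Rmin_left, ?Rmax_right in * by lra.
  - intros x Hx; apply HD; lra.
  - intros x Hx; apply continuity_pt_of_ex_derive; eexists; apply (HD x Hx).
  - destruct (HD c Hc) as [_ Hc']; nra.
Qed.

Lemma at_right_between (a t : R) : a < t -> at_right a (fun s => a < s < t).
Proof.
  intro Hat; exists (mkposreal (t - a) ltac:(lra)); intros s Hs Has.
  apply (Rabs_lt_between' s a (t - a)) in Hs; simpl in Hs; lra.
Qed.

Lemma nonpos_of_derive_nonpos (g : R -> R) :
  (forall t, 0 < t -> exists d, is_derive g t d /\ d <= 0) ->
  (forall eps, 0 < eps -> at_right 0 (fun s => g s < eps)) ->
  forall t, 0 < t -> g t <= 0.
Proof.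
  intros Hd Hlim t Ht; apply Rnot_lt_le; intro Hgt.
  destruct (filter_ex _ (filter_and _ _ (Hlim (g t) Hgt) (at_right_between 0 t Ht)))
    as (s & Hgs & Hs).
  enough (g t <= g s) by lra.
  apply derive_nonpos_le; [lra|].
  intros x Hx; apply Hd; lra.
Qed.

Lemma is_derive_exp_scal (K t : R) :
  is_derive (fun t => exp (- K * t)) t (- K * exp (- K * t)).
Proof. auto_derive; [exact I | ring]. Qed.

Lemma exp_le_1 x : x <= 0 -> exp x <= 1.
Proof.
  intro Hx; rewrite <- exp_0; destruct (Rle_lt_or_eq_dec x 0 Hx) as [Hlt | ->];
    [left; apply exp_increasing, Hlt | apply Rle_refl].
Qed.

Lemma pos_part_mul_le (u du q L : R) :
  0 <= q -> (0 < u -> du <= L * (u + q)) -> pos_part u * du <= L * pos_part u * (pos_part u + q).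
Proof.
  intros Hq Hb; destruct (Rle_dec u 0) as [Hu | Hu].
  - rewrite pos_part_eq0 by exact Hu; lra.
  - rewrite pos_part_id by lra; specialize (Hb ltac:(lra)); nra.
Qed.

Section Comparison.

Variables (u1 u2 du1 du2 : R -> R) (L1 L2 : R).
Hypotheses (HL1 : 0 <= L1) (HL2 : 0 <= L2).
Hypothesis Hd : forall t, 0 < t -> is_derive u1 t (du1 t) /\ is_derive u2 t (du2 t).
Hypothesis Hb1 : forall t, 0 < t -> 0 < u1 t -> du1 t <= L1 * (u1 t + pos_part (u2 t)).
Hypothesis Hb2 : forall t, 0 < t -> 0 < u2 t -> du2 t <= L2 * (u2 t + pos_part (u1 t)).

Definition lyapunov (t : R) : R :=
  (pos_part (u1 t) ^ 2 + pos_part (u2 t) ^ 2) * exp (- (4 * (L1 + L2)) * t).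

Lemma lyapunov_derive_nonpos t : 0 < t -> exists d, is_derive lyapunov t d /\ d <= 0.
Proof.
  intro Ht; destruct (Hd t Ht) as [Hu1 Hu2].
  set (K := 4 * (L1 + L2)).
  eexists; split.
  - apply (is_derive_mult (fun t => pos_part (u1 t) ^ 2 + pos_part (u2 t) ^ 2)
             (fun t => exp (- K * t))); [| apply is_derive_exp_scal | exact Rmult_comm].
    apply (is_derive_plus (fun t => pos_part (u1 t) ^ 2) (fun t => pos_part (u2 t) ^ 2)).
    + exact (is_derive_pos_part_sqr_comp u1 t _ Hu1).
    + exact (is_derive_pos_part_sqr_comp u2 t _ Hu2).
  - unfold plus, mult; simpl.
    pose proof (pos_part_mul_le (u1 t) (du1 t) _ L1 (pos_part_ge0 (u2 t)) (Hb1 t Ht)) as Hp1.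
    pose proof (pos_part_mul_le (u2 t) (du2 t) _ L2 (pos_part_ge0 (u1 t)) (Hb2 t Ht)) as Hp2.
    pose proof (pos_part_ge0 (u1 t)); pose proof (pos_part_ge0 (u2 t)).
    pose proof (exp_pos (- K * t)).
    set (p1 := pos_part (u1 t)) in *; set (p2 := pos_part (u2 t)) in *.
    (* 2 p1 (p1 + p2) <= 4 (p1^2 + p2^2), and likewise for p2 *)
    enough (2 * p1 * du1 t + 2 * p2 * du2 t - K * (p1 ^ 2 + p2 ^ 2) <= 0)
      by (clearbody K p1 p2; nra).
    assert (HL : forall L, 0 <= L -> 0 <= L * (p1 - p2) ^ 2 /\ 0 <= L * p1 ^ 2 /\ 0 <= L * p2 ^ 2)
      by (intros L HL; repeat split; apply Rmult_le_pos; auto; apply pow2_ge_0).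
    destruct (HL L1 HL1) as (? & ? & ?), (HL L2 HL2) as (? & ? & ?).
    unfold K; clearbody p1 p2; nra.
Qed.

Lemma lyapunov_at_right :
  u1 0 <= 0 -> u2 0 <= 0 ->
  filterlim u1 (at_right 0) (locally (u1 0)) -> filterlim u2 (at_right 0) (locally (u2 0)) ->
  forall eps, 0 < eps -> at_right 0 (fun s => lyapunov s < eps).
Proof.
  intros Hu10 Hu20 Hc1 Hc2 eps Heps.
  assert (Heps2 : 0 < eps / 2) by lra.
  assert (Hpos : at_right 0 (fun s => 0 < s))
    by (exists (mkposreal 1 Rlt_0_1); intros s _ Hs; exact Hs).
  eapply filter_imp; [| exact (filter_and _ _ Hpos (filter_and _ _
    (pos_part_sqr_at_right u1 Hu10 Hc1 (eps / 2) Heps2)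
    (pos_part_sqr_at_right u2 Hu20 Hc2 (eps / 2) Heps2)))].
  intros s (Hs & Hs1 & Hs2); unfold lyapunov.
  assert (Hexp : exp (- (4 * (L1 + L2)) * s) <= 1) by (apply exp_le_1; nra).
  pose proof (exp_pos (- (4 * (L1 + L2)) * s)).
  pose proof (pow2_ge_0 (pos_part (u1 s))); pose proof (pow2_ge_0 (pos_part (u2 s))).
  nra.
Qed.

Lemma comparison_principle :
  u1 0 <= 0 -> u2 0 <= 0 ->
  filterlim u1 (at_right 0) (locally (u1 0)) -> filterlim u2 (at_right 0) (locally (u2 0)) ->
  forall t, 0 <= t -> u1 t <= 0 /\ u2 t <= 0.
Proof.
  intros Hu10 Hu20 Hc1 Hc2 t Ht.
  destruct (Req_dec t 0) as [-> | Ht0]; [auto|].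
  assert (HV : lyapunov t <= 0)
    by (apply nonpos_of_derive_nonpos;
        [exact lyapunov_derive_nonpos | exact (lyapunov_at_right Hu10 Hu20 Hc1 Hc2) | lra]).
  assert (Hsq : pos_part (u1 t) ^ 2 + pos_part (u2 t) ^ 2 <= 0).
  { unfold lyapunov in HV; pose proof (exp_pos (- (4 * (L1 + L2)) * t)); nra. }
  pose proof (pow2_ge_0 (pos_part (u1 t))); pose proof (pow2_ge_0 (pos_part (u2 t))).
  split; apply Rnot_lt_le; intro Hut.
  - rewrite pos_part_id in Hsq by lra; nra.
  - rewrite (pos_part_id (u2 t)) in Hsq by lra; nra.
Qed.

End Comparison.

Lemma Rmin_lipschitz a b c d : Rabs (Rmin a b - Rmin c d) <= Rabs (a - c) + Rabs (b - d).
Proof. unfold Rmin; destruct (Rle_dec a b), (Rle_dec c d); split_Rabs; lra. Qed.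

Lemma supply_lipschitz F B C a b : 0 < F -> C < B ->
  Rabs (supply F B C a - supply F B C b) <= F / (B - C) * Rabs (a - b).
Proof.
  intros HF HCB; set (k := F / (B - C)).
  assert (Hk : 0 < k) by (apply Rdiv_lt_0_compat; lra).
  assert (HFk : F = k * (B - C)) by (unfold k; field; lra).
  unfold supply; fold k.
  destruct (Rlt_dec a C), (Rlt_dec b C); rewrite ?HFk; split_Rabs; nra.
Qed.

Lemma demand_lipschitz F C a b : 0 < F -> 0 < C ->
  Rabs (demand F C a - demand F C b) <= F / C * Rabs (a - b).
Proof.
  intros HF HC; set (v := F / C).
  assert (Hv : 0 < v) by (apply Rdiv_lt_0_compat; lra).
  assert (HFv : F = v * C) by (unfold v; field; lra).
  unfold demand; fold v.
  destruct (Rlt_dec a C), (Rlt_dec b C); rewrite ?HFv; split_Rabs; nra.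
Qed.

Lemma IVT_interv_le (tau : R -> R) o o' s :
  (forall z, o <= z <= o' -> continuity_pt tau z) ->
  o < o' -> tau o <= s <= tau o' -> exists z, o <= z <= o' /\ tau z = s.
Proof.
  intros Hc Hoo' Hs.
  destruct (Req_dec s (tau o)) as [-> | Hs1]; [exists o; split; [lra | reflexivity]|].
  destruct (Req_dec s (tau o')) as [-> | Hs2]; [exists o'; split; [lra | reflexivity]|].
  destruct (Ranalysis5.IVT_interv (fun z => tau z - s) o o') as (z & Hz & Hzs); try lra.
  - intros z Hz; apply continuity_pt_minus;
      [apply Hc, Hz | apply continuity_pt_const; now intros ? ?].
  - exists z; split; [exact Hz | lra].
Qed.

Lemma comp_strict_incr_nondecreasing (G tau : R -> R) (B : R) :
  C1_strict_incr B tau ->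
  (forall z, 0 <= z <= B -> exists d, is_derive G (tau z) d /\ 0 < d) ->
  forall o o', 0 <= o -> o <= o' -> o' <= B -> G (tau o) <= G (tau o').
Proof.
  intros [Htau_d Htau_incr] HG o o' Ho Hoo' Ho'.
  destruct (Req_dec o o') as [-> | Hne]; [lra|].
  assert (HG' : forall s, tau o <= s <= tau o' -> is_derive G s (Derive G s) /\ 0 < Derive G s).
  { intros s Hs.
    destruct (IVT_interv_le tau o o' s) as (z & Hz & <-); [|lra|exact Hs|].
    - intros z Hz; apply continuity_pt_of_ex_derive, Htau_d; lra.
    - destruct (HG z ltac:(lra)) as (d & Hd & Hdpos).
      rewrite (is_derive_unique _ _ _ Hd); auto. }
  left; apply (incr_function_le G (tau o) (tau o') (Derive G)); simpl.
  - intros x Hx Hx'; apply HG'; lra.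
  - intros x Hx Hx'; apply HG'; lra.
  - lra.
  - apply Htau_incr; lra.
  - lra.
Qed.

Lemma Rmax_sub_r a b : Rmax a b - b = pos_part (a - b).
Proof. unfold pos_part, Rmax; destruct (Rle_dec a b), (Rle_dec (a - b) 0); lra. Qed.

Lemma one_sided_bound_of_cross_monotone (f : R -> R -> R) (B B' L : R) :
  (forall a o o', 0 <= a <= B -> 0 <= o -> o <= o' -> o' <= B' -> f a o <= f a o') ->
  (forall a o a' o', 0 <= a <= B -> 0 <= o <= B' -> 0 <= a' <= B -> 0 <= o' <= B' ->
     Rabs (f a o - f a' o') <= L * (Rabs (a - a') + Rabs (o - o'))) ->
  forall a o a' o', 0 <= a <= B -> 0 <= o <= B' -> 0 <= a' <= B -> 0 <= o' <= B' ->
  f a o - f a' o' <= L * (Rabs (a - a') + pos_part (o - o')).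
Proof.
  intros Hmono Hlip a o a' o' Ha Ho Ha' Ho'.
  assert (Hm : 0 <= Rmax o o' <= B')
    by (split; [apply (Rle_trans _ o), Rmax_l | apply Rmax_lub]; lra).
  assert (Hup : f a o <= f a (Rmax o o')) by (apply Hmono; try apply Rmax_l; lra).
  pose proof (Hlip a (Rmax o o') a' o' Ha Hm Ha' Ho') as Hl.
  rewrite (Rabs_pos_eq (Rmax o o' - o')), Rmax_sub_r in Hl
    by (pose proof (Rmax_r o o'); lra).
  pose proof (Rle_abs (f a (Rmax o o') - f a' o')); lra.
Qed.

(* A route with own density [a] and other density [o]: [rt a s] is its routing
   ratio when the other route's travel time is [s], i.e. [rt a s = r1 (tau1 a) s]
   for route 1 and [rt a s = r2 s (tau2 a)] for route 2, and [flux a o] is then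
   [rhs] at the corresponding point. *)
Section Route.

Variables (phi alpha r0 F B C B' Lr : R) (rt : R -> R -> R) (tau : R -> R).
Hypotheses (hphi : 0 < phi) (halpha : 0 < alpha) (hF : 0 < F) (hC : 0 < C) (hCB : C < B).

Definition flux_lip : R := phi * alpha * Lr + F / (B - C) + F / C.

Definition flux (a o : R) : R :=
  Rmin (phi * ((1 - alpha) * r0 + alpha * rt a (tau o))) (supply F B C a) - demand F C a.

Hypothesis hLr : 0 <= Lr.
Hypothesis htau : C1_strict_incr B' tau.
Hypothesis hrt_incr : forall a o, 0 <= a <= B -> 0 <= o <= B' ->
  exists d, is_derive (fun s => (1 - alpha) * r0 + alpha * rt a s) (tau o) d /\ 0 < d.
Hypothesis hrt_lip : forall a o a' o',
  0 <= a <= B -> 0 <= o <= B' -> 0 <= a' <= B -> 0 <= o' <= B' ->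
  Rabs (rt a (tau o) - rt a' (tau o')) <= Lr * (Rabs (a - a') + Rabs (o - o')).

Lemma flux_cross_monotone a o o' :
  0 <= a <= B -> 0 <= o -> o <= o' -> o' <= B' -> flux a o <= flux a o'.
Proof.
  intros Ha Ho Hoo' Ho'; unfold flux.
  assert (Hr : (1 - alpha) * r0 + alpha * rt a (tau o) <= (1 - alpha) * r0 + alpha * rt a (tau o')).
  { apply (comp_strict_incr_nondecreasing (fun s => (1 - alpha) * r0 + alpha * rt a s) tau B');
      auto; intros z Hz; apply hrt_incr; auto. }
  apply Rplus_le_compat_r, Rle_min_compat_r, Rmult_le_compat_l; lra.
Qed.

Lemma flux_lipschitz a o a' o' :
  0 <= a <= B -> 0 <= o <= B' -> 0 <= a' <= B -> 0 <= o' <= B' ->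
  Rabs (flux a o - flux a' o')
    <= flux_lip * (Rabs (a - a') + Rabs (o - o')).
Proof.
  intros Ha Ho Ha' Ho'; unfold flux, flux_lip.
  pose proof (Rmin_lipschitz (phi * ((1 - alpha) * r0 + alpha * rt a (tau o))) (supply F B C a)
                (phi * ((1 - alpha) * r0 + alpha * rt a' (tau o'))) (supply F B C a')) as Hmin.
  replace (phi * ((1 - alpha) * r0 + alpha * rt a (tau o))
           - phi * ((1 - alpha) * r0 + alpha * rt a' (tau o')))
    with (phi * alpha * (rt a (tau o) - rt a' (tau o'))) in Hmin by ring.
  rewrite Rabs_mult, (Rabs_pos_eq (phi * alpha)) in Hmin by nra.
  pose proof (hrt_lip a o a' o' Ha Ho Ha' Ho') as Hrt.
  pose proof (supply_lipschitz F B C a a' hF hCB).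
  pose proof (demand_lipschitz F C a a' hF hC).
  assert (0 < F / (B - C)) by (apply Rdiv_lt_0_compat; lra).
  assert (0 < F / C) by (apply Rdiv_lt_0_compat; lra).
  pose proof (Rabs_pos (a - a')); pose proof (Rabs_pos (o - o')).
  assert (phi * alpha * Rabs (rt a (tau o) - rt a' (tau o'))
          <= phi * alpha * (Lr * (Rabs (a - a') + Rabs (o - o'))))
    by (apply Rmult_le_compat_l; nra).
  set (m := Rmin (phi * ((1 - alpha) * r0 + alpha * rt a (tau o))) (supply F B C a)) in *.
  set (m' := Rmin (phi * ((1 - alpha) * r0 + alpha * rt a' (tau o'))) (supply F B C a')) in *.
  replace (m - demand F C a - (m' - demand F C a'))
    with ((m - m') + - (demand F C a - demand F C a')) by ring.
  eapply Rle_trans; [apply Rabs_triang|]; rewrite Rabs_Ropp.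
  assert (0 <= (F / (B - C) + F / C) * Rabs (o - o')) by (apply Rmult_le_pos; lra).
  clearbody m m'; nra.
Qed.

Lemma flux_lip_ge0 : 0 <= flux_lip.
Proof.
  unfold flux_lip.
  assert (0 < F / (B - C)) by (apply Rdiv_lt_0_compat; lra).
  assert (0 < F / C) by (apply Rdiv_lt_0_compat; lra).
  assert (0 <= phi * alpha * Lr) by (apply Rmult_le_pos; nra).
  lra.
Qed.

Lemma flux_one_sided_bound a o a' o' :
  0 <= a <= B -> 0 <= o <= B' -> 0 <= a' <= B -> 0 <= o' <= B' ->
  flux a o - flux a' o' <= flux_lip * (Rabs (a - a') + pos_part (o - o')).
Proof.
  apply (one_sided_bound_of_cross_monotone flux B B');
    [apply flux_cross_monotone | apply flux_lipschitz].
Qed.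

End Route.

Lemma filterlim_Rminus {T : Type} {F : (T -> Prop) -> Prop} {FF : Filter F}
  (f g : T -> R) (a b : R) :
  filterlim f F (locally a) -> filterlim g F (locally b) ->
  filterlim (fun t => f t - g t) F (locally (a - b)).
Proof.
  intros Hf Hg.
  exact (filterlim_comp_2 (H := locally (opp b)) f (fun t => opp (g t)) plus Hf
           (filterlim_comp _ _ _ g opp F _ _ Hg (filterlim_opp b))
           (filterlim_plus a (opp b))).
Qed.

Theorem proposition1
  (B1 C1 F1 B2 C2 F2 phi alpha r01 r02 : R)
  (tau1 tau2 : R -> R) (r1 r2 : R -> R -> R)
  (* positivity of parameters, C_i < B_i, phi > 0 *)
  (hB1 : 0 < B1) (hC1 : 0 < C1) (hF1 : 0 < F1) (hCB1 : C1 < B1)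
  (hB2 : 0 < B2) (hC2 : 0 < C2) (hF2 : 0 < F2) (hCB2 : C2 < B2)
  (hphi : 0 < phi)
  (* (A1) *)
  (A1 : phi < F1 + F2)
  (* (A2)-(A3) *)
  (halpha : 0 < alpha <= 1)
  (hr01 : 0 <= r01) (hr02 : 0 <= r02) (hr0 : r01 + r02 = 1)
  (htau1 : C1_strict_incr B1 tau1) (htau2 : C1_strict_incr B2 tau2)
  (hr_range : forall x1 x2, in_Omega B1 B2 x1 x2 ->
      0 <= r1 (tau1 x1) (tau2 x2) <= 1 /\ 0 <= r2 (tau1 x1) (tau2 x2) <= 1 /\
      r1 (tau1 x1) (tau2 x2) + r2 (tau1 x1) (tau2 x2) = 1)
  (hr1_lip : lipschitz_on_Omega B1 B2 (fun x1 x2 => r1 (tau1 x1) (tau2 x2)))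
  (hr2_lip : lipschitz_on_Omega B1 B2 (fun x1 x2 => r2 (tau1 x1) (tau2 x2)))
  (hr1_C1 : C1_on_Omega B1 B2 (fun x1 x2 => r1 (tau1 x1) (tau2 x2)))
  (hr2_C1 : C1_on_Omega B1 B2 (fun x1 x2 => r2 (tau1 x1) (tau2 x2)))
  (* (A4): dR_1/dtau_2 > 0 and dR_2/dtau_1 > 0 on Omega *)
  (A4_1 : forall x1 x2, in_Omega B1 B2 x1 x2 ->
      exists d, is_derive (fun s => (1 - alpha) * r01 + alpha * r1 (tau1 x1) s)
                  (tau2 x2) d /\ 0 < d)
  (A4_2 : forall x1 x2, in_Omega B1 B2 x1 x2 ->
      exists d, is_derive (fun s => (1 - alpha) * r02 + alpha * r2 s (tau2 x2))
                  (tau1 x1) d /\ 0 < d)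
  (* (A5) *)
  (A5_1 : F1 > (1 - alpha) * phi * r01)
  (A5_2 : F2 > (1 - alpha) * phi * r02)
  (* (A6): phi < E_i = v_i B_i *)
  (A6_1 : phi < F1 / C1 * B1)
  (A6_2 : phi < F2 / C2 * B2)
  (* two solutions with ordered initial data *)
  (a1 a2 b1 b2 : R) (x1 x2 y1 y2 : R -> R)
  (ha : in_Omega B1 B2 a1 a2) (hb : in_Omega B1 B2 b1 b2)
  (hab : a1 <= b1 /\ a2 <= b2)
  (hx : is_solution B1 C1 F1 B2 C2 F2 phi alpha r01 r02 r1 r2 tau1 tau2 a1 a2 x1 x2)
  (hy : is_solution B1 C1 F1 B2 C2 F2 phi alpha r01 r02 r1 r2 tau1 tau2 b1 b2 y1 y2) :
  forall t, 0 <= t -> x1 t <= y1 t /\ x2 t <= y2 t.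
Proof.
  destruct hx as (hx10 & hx20 & hxO & hxc1 & hxc2 & hxd),
           hy as (hy10 & hy20 & hyO & hyc1 & hyc2 & hyd).
  destruct hr1_lip as (Lr1 & hLr1 & hlip1), hr2_lip as (Lr2 & hLr2 & hlip2).
  assert (hlip2' : forall a o a' o',
    0 <= a <= B2 -> 0 <= o <= B1 -> 0 <= a' <= B2 -> 0 <= o' <= B1 ->
    Rabs (r2 (tau1 o) (tau2 a) - r2 (tau1 o') (tau2 a'))
      <= Lr2 * (Rabs (a - a') + Rabs (o - o'))).
  { intros; rewrite Rplus_comm; apply hlip2; split; assumption. }
  pose proof (flux_one_sided_bound phi alpha r01 F1 B1 C1 B2 Lr1 (fun a s => r1 (tau1 a) s) tau2
    hphi (proj1 halpha) hF1 hC1 hCB1 htau2 (fun a o ha ho => A4_1 a o (conj ha ho))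
    (fun a o a' o' ha ho ha' ho' => hlip1 a o a' o' (conj ha ho) (conj ha' ho'))) as bound1.
  pose proof (flux_one_sided_bound phi alpha r02 F2 B2 C2 B1 Lr2 (fun a s => r2 s (tau2 a)) tau1
    hphi (proj1 halpha) hF2 hC2 hCB2 htau1 (fun a o ha ho => A4_2 o a (conj ho ha)) hlip2')
    as bound2.
  intros t ht; enough (x1 t - y1 t <= 0 /\ x2 t - y2 t <= 0) by lra.
  eapply (comparison_principle (fun t => x1 t - y1 t) (fun t => x2 t - y2 t)); try lra.
  - apply (flux_lip_ge0 _ _ _ _ _ _ hphi (proj1 halpha) hF1 hC1 hCB1 hLr1).
  - apply (flux_lip_ge0 _ _ _ _ _ _ hphi (proj1 halpha) hF2 hC2 hCB2 hLr2).
  - intros s hs; destruct (hxd s hs) as [dx1 dx2], (hyd s hs) as [dy1 dy2].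
    split; [exact (is_derive_minus _ _ _ _ _ dx1 dy1) | exact (is_derive_minus _ _ _ _ _ dx2 dy2)].
  - intros s hs hu; destruct (hxO s ltac:(lra)), (hyO s ltac:(lra)).
    rewrite <- (Rabs_pos_eq (x1 s - y1 s)) by lra; apply bound1; assumption.
  - intros s hs hu; destruct (hxO s ltac:(lra)), (hyO s ltac:(lra)).
    rewrite <- (Rabs_pos_eq (x2 s - y2 s)) by lra; apply bound2; assumption.
  - apply filterlim_Rminus; assumption.
  - apply filterlim_Rminus; assumption.
Qed.
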